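(* Let $I\subseteq\mathbb R$ be an interval, $\lambda$ a positive measure on $(I\times\mathbb R^d,\mathcal B(I\times\mathbb R^d))$, $p\in[1,\infty)$, and for each $l\in\mathbb N$ let $G^{(l)}:(I\times\mathbb R^d)^2\to[0,\infty)$ be measurable with $G^{(l)}(t,x;s,y)=0$ whenever $s>t$. Let $f\in L^\infty_I$ be positive and assume $\theta:=\sup_{(t,x)\in I\times\mathbb R^d}\sum_{l=1}^\infty\big(\int_I\int_{\mathbb R^d}G^{(l)}(t,x;s,y)\lambda(ds,dy)\big)^{1/p}<\infty$. Let $\gamma\in(0,1)$ and let $v\ge0$ be a function with $v\in L^\infty_{I_T}$ for every $T\in I$ satisfying $v(t,x)\le f(t,x)+\big(\sum_{l=1}^\infty\int_I\int_{\mathbb R^d}G^{(l)}(t,x;s,y)v(s,y)^{p\gamma}\lambda(ds,dy)\big)^{1/p}$ for all $(t,x)\in I\times\mathbb R^d$. Then $v\in L^\infty_I$ and $\|v\|_{L^\infty_I}\le a$, where $a$ is the unique strictly positive solution of $a-\|f\|_{L^\infty_I}-\theta a^\gamma=0$.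
   Context: $I_T:=I\cap(-\infty,T]$. For $J\subseteq I$, $L^\infty_J$ is the space of measurable $f:J\times\mathbb R^d\to\mathbb R$ with $\|f\|_{L^\infty_J}:=\sup_{(t,x)\in J\times\mathbb R^d}|f(t,x)|<\infty$. ''Positive'' means $\ge0$. *)

From HB Require Import structures.
From mathcomp Require Import all_boot all_order all_algebra.
From mathcomp Require Import all_classical all_reals all_analysis.
Set Implicit Arguments. Unset Strict Implicit. Unset Printing Implicit Defensive.
Import Order.TTheory GRing.Theory Num.Theory.
Local Open Scope classical_set_scope.
Local Open Scope ring_scope.

(* R^d is modelled as [d.-tuple R] with its
   product sigma-algebra (= Borel sigma-algebra of R^d); a point (t,x) of
   R x R^d has type [(R * d.-tuple R)%type]. *)

Definition ptsp (R : realType) (d : nat) := (R * d.-tuple R)%type.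

Definition slab (R : realType) (d : nat) (I : interval R) : set (ptsp R d) :=
  [set z | z.1 \in I].

Definition slab_upto (R : realType) (d : nat) (I : interval R) (T : R)
  : set (ptsp R d) :=
  [set z | z.1 \in I /\ z.1 <= T].

Definition Linf (R : realType) (d : nat) (J : set (ptsp R d))
    (g : ptsp R d -> R) : Prop :=
  measurable_fun J g /\ exists M : R, forall z, J z -> `|g z| <= M.

Definition normLinf (R : realType) (d : nat) (J : set (ptsp R d))
    (g : ptsp R d -> R) : \bar R :=
  ereal_sup [set (`|g z|)%:E | z in J].

Arguments slab {R} d I _.
Arguments slab_upto {R} d I T _.
Arguments Linf {R d} J g.
Arguments normLinf {R d} J g.

From HB Require Import structures.
From mathcomp Require Import all_boot all_order all_algebra.
From mathcomp Require Import all_classical all_reals all_analysis.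
From mathcomp Require Import lra measurable_realfun.
Import Order.TTheory GRing.Theory Num.Theory.
Local Open Scope classical_set_scope.
Local Open Scope ring_scope.

(* Fix z and T := z.1.  By causality the right-hand side at z only sees v on
   I_T, where v is bounded; if M bounds v there, then
     (sum_l int G v^(p gamma))^(1/p) <= M^gamma (sum_l int G)^(1/p)
                                     <= M^gamma sum_l (int G)^(1/p) <= theta M^gamma,
   the middle step being the subadditivity of t |-> t^(1/p).  Hence the supremum
   M of v over I_T satisfies M <= ||f|| + theta M^gamma.  Dividing by M^gamma, this
   says M^(1-gamma) - ||f|| M^(-gamma) <= theta, and the left side is increasing
   in M, so M is at most the positive root a; the same inequality also gives the
   a priori bound M <= 1 + (||f|| + theta)^(1/(1-gamma)), whence v is in L^oo_I. *)

Section sublinear_fixpoint.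
Context {R : realType} {F th g : R}.
Hypotheses (F_ge0 : 0 <= F) (g01 : 0 < g < 1).

Lemma sublinear_divE x : 0 < x ->
  (x <= F + th * x `^ g) = (x `^ (1 - g) <= F / x `^ g + th).
Proof.
move=> x0; have xg0 : 0 < x `^ g by exact: powR_gt0.
rewrite powRB ?(gt_eqF x0) ?implybT // (powRr1 (ltW x0)) ler_pdivrMr //.
by rewrite mulrDl divfK ?gt_eqF.
Qed.

Lemma sublinear_le_root a M : 0 < a -> a - F - th * a `^ g = 0 ->
  M <= F + th * M `^ g -> M <= a.
Proof.
move=> a0 ha hM; rewrite leNgt; apply/negP => aM.
have M0 : 0 < M by exact: lt_trans aM.
have /andP[g0 g1] := g01.
have aE : a `^ (1 - g) = F / a `^ g + th.
  rewrite powRB ?(gt_eqF a0) ?implybT // (powRr1 (ltW a0)).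
  rewrite {1}(_ : a = F + th * a `^ g); last by lra.
  by rewrite mulrDl mulfK // gt_eqF // powR_gt0.
move: hM; rewrite sublinear_divE // leNgt => /negP; apply.
apply: (le_lt_trans _ (_ : a `^ (1 - g) < _)); last first.
  by apply: gt0_ltr_powR; rewrite ?subr_gt0 // nnegrE ltW.
rewrite aE lerD2r ler_wpM2l // lef_pV2 ?posrE ?powR_gt0 //.
by apply: ge0_ler_powR; rewrite ?nnegrE ltW.
Qed.

Lemma sublinear_le M : M <= F + th * M `^ g -> M <= 1 + (F + th) `^ (1 - g)^-1.
Proof.
move=> hM; have /andP[g0 g1] := g01.
have [M1|M1] := leP M 1; first by rewrite ler_wpDr ?powR_ge0.
have M0 : 0 < M by exact: lt_trans M1.
have Mg1 : 1 <= M `^ g.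
  have := @ge0_ler_powR R g (ltW g0) 1 M; rewrite powR1; apply => //.
  - by rewrite nnegrE.
  - by rewrite nnegrE ltW.
  - exact: ltW.
have hM' : M `^ (1 - g) <= F + th.
  move: hM; rewrite sublinear_divE // => /le_trans; apply; rewrite lerD2r.
  by rewrite ler_pdivrMr ?(lt_le_trans ltr01) // ler_peMr.
rewrite ler_wpDl //.
have -> : M = (M `^ (1 - g)) `^ (1 - g)^-1.
  by rewrite -powRrM mulfV ?gt_eqF ?subr_gt0 // powRr1 ?ltW.
apply: ge0_ler_powR => //.
- by rewrite invr_ge0 subr_ge0 ltW.
- by rewrite nnegrE powR_ge0.
- by rewrite nnegrE (le_trans (powR_ge0 _ _) hM').
Qed.

End sublinear_fixpoint.

Lemma powR_superadditive (R : realType) (p x y : R) : 1 <= p -> 0 <= x -> 0 <= y ->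
  x `^ p + y `^ p <= (x + y) `^ p.
Proof.
move=> p1 x0 y0; have p0 : p != 0 by rewrite gt_eqF // (lt_le_trans ltr01 p1).
have [s0|s0] := eqVneq (x + y) 0.
  have [-> ->] : x = 0 /\ y = 0 by split; lra.
  by rewrite addr0 powR0 // addr0.
have sp : 0 < x + y by rewrite lt_def s0 addr_ge0.
(* [z^p = (x+y)^p (z/(x+y))^p <= (x+y)^p (z/(x+y))] since [z/(x+y) <= 1] *)
have le_part z : 0 <= z -> z <= x + y -> z `^ p <= (x + y) `^ p * (z / (x + y)).
  move=> z0 zs; have s_ge0 := ltW sp.
  rewrite -{1}(divfK s0 z) mulrC powRM ?divr_ge0 // ler_pM2l ?powR_gt0 //.
  have [->|zn0] := eqVneq z 0; first by rewrite mul0r powR0.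
  have z_gt0 : 0 < z by rewrite lt_def zn0.
  by apply: ge1r_powR => //; rewrite divr_gt0 //= ler_pdivrMr // mul1r.
apply: (le_trans (lerD (le_part x x0 _) (le_part y y0 _))); [lra|lra|].
by rewrite -mulrDr -mulrDl divff // mulr1.
Qed.

Section poweR_series.
Local Open Scope ereal_scope.
Variables (R : realType) (p : R).
Hypothesis p_ge1 : (1 <= p)%R.

Let p_gt0 : (0 < p)%R. Proof. exact: lt_le_trans ltr01 p_ge1. Qed.

Lemma poweR_superadditive (x y : \bar R) : 0 <= x -> 0 <= y ->
  x `^ p + y `^ p <= (x + y) `^ p.
Proof.
case: x => [x| |] //; case: y => [y| |] // y0 x0.
- by rewrite !poweR_EFin -EFinD lee_fin powR_superadditive.
- by rewrite addey // poweRyr ?gt_eqF // leey.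
- by rewrite addye // poweRyr ?gt_eqF // leey.
- by rewrite addye // poweRyr ?gt_eqF // leey.
Qed.

Lemma sum_poweR_le (I : Type) (s : seq I) (c : I -> \bar R) :
  (forall i, 0 <= c i) -> \sum_(i <- s) c i `^ p <= (\sum_(i <- s) c i) `^ p.
Proof.
move=> c0; elim: s => [|i s IH]; first by rewrite !big_nil poweR0r ?gt_eqF.
have s_ge0 : 0 <= \sum_(j <- s) c j by apply: sume_ge0.
rewrite !big_cons; apply: (le_trans _ (poweR_superadditive _ _ (c0 i) s_ge0)).
by rewrite leeD2l.
Qed.

Lemma poweRV_nneseries_le (A : nat -> \bar R) : (forall l, 0 <= A l) ->
  (\sum_(1 <= l <oo) A l) `^ p^-1 <= \sum_(1 <= l <oo) A l `^ p^-1.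
Proof.
move=> A0; set B := \sum_(1 <= l <oo) A l `^ p^-1.
have B0 : 0 <= B by apply: nneseries_ge0 => n _ _; exact: poweR_ge0.
have ge0_itv (x : \bar R) : 0 <= x -> x \in `[0, +oo].
  by move=> x0; rewrite in_itv /= x0 leey.
have AB : \sum_(1 <= l <oo) A l <= B `^ p.
  apply: lime_le; first exact: is_cvg_nneseries.
  near=> n.
  rewrite (eq_bigr (fun l => (A l `^ p^-1) `^ p)); last first.
    by move=> l _; rewrite -poweRrM mulVf ?gt_eqF // poweRe1.
  apply: (le_trans (sum_poweR_le _ _ _ (fun l => poweR_ge0 _ _))).
  apply: gt0_ler_poweR; rewrite ?ge0_itv //; first exact: ltW.
  - by apply: sume_ge0 => l _; exact: poweR_ge0.
  - by apply: nneseries_lim_ge => l _ _; exact: poweR_ge0.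
apply: (le_trans (gt0_ler_poweR _ _ _ AB)); rewrite ?ge0_itv ?poweR_ge0 //.
- by rewrite invr_ge0 ltW.
- exact: nneseries_ge0.
- by rewrite -poweRrM mulfV ?gt_eqF // poweRe1.
Unshelve. all: by end_near.
Qed.

End poweR_series.

(* No measurability is needed: a nonnegative integral is the supremum of the
   integrals of the simple functions below the integrand. *)
Lemma ge0_le_integral_any d' (T : measurableType d') (R : realType)
    (mu : {measure set T -> \bar R}) (D : set T) (f g : T -> \bar R) :
  (forall x, D x -> (0 <= f x)%E) -> (forall x, D x -> (f x <= g x)%E) ->
  (\int[mu]_(x in D) f x <= \int[mu]_(x in D) g x)%E.
Proof.
move=> f0 fg.
have g0 x : D x -> (0 <= g x)%E by move=> Dx; exact: le_trans (f0 _ Dx) (fg _ Dx).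
rewrite (ge0_integralE mu f0) (ge0_integralE mu g0).
apply: ereal_sup_le => _ [h hf <-]; exists h => // x.
apply: (le_trans (hf x)); rewrite /patch; case: ifP => // /[1!inE]; exact: fg.
Qed.

Section slabs.
Variables (R : realType) (d : nat) (I : interval R).

Let measurable_fst_preimage (B : set R) :
  measurable B -> measurable [set z : ptsp R d | B z.1].
Proof.
move=> mB; have := @measurable_fst _ _ R (d.-tuple R) measurableT B mB.
by rewrite setTI.
Qed.

Lemma measurable_slab : measurable (slab d I).
Proof. exact: measurable_fst_preimage _ (measurable_itv I). Qed.

Lemma measurable_slab_upto T : measurable (slab_upto d I T).
Proof.
have := measurable_fst_preimage _
  (measurableI _ _ (measurable_itv I) (measurable_itv `]-oo, T])).
by congr measurable; apply/seteqP; split=> z /= [].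
Qed.

Lemma itv_le_ratr_or_max x : x \in I ->
  (exists2 q : rat, ratr q \in I & x <= ratr q) \/ (forall y, y \in I -> y <= x).
Proof.
move=> Ix; have [[y Iy xy]|] := pselect (exists2 y, y \in I & x < y); last first.
  move=> nomax; right => y Iy; rewrite leNgt; apply/negP => xy.
  by apply: nomax; exists y.
left; have [q] := rat_in_itvoo xy; rewrite in_itv /= => /andP[xq qy].
exists q; last exact: ltW.
by apply: (interval_is_interval Ix Iy); rewrite !ltW.
Qed.

Lemma measurable_fun_slab (g : ptsp R d -> R) :
  (forall T, T \in I -> measurable_fun (slab_upto d I T) g) ->
  measurable_fun (slab d I) g.
Proof.
move=> mg; pose maxI := [set m | m \in I /\ forall y, y \in I -> y <= m].
pose top := xget 0 maxI.
pose t n := if n is n'.+1 then oapp ratr top (@unpickle rat n') else top.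
pose E n := if t n \in I then slab_upto d I (t n) else set0.
have -> : slab d I = \bigcup_n E n.
  apply/seteqP; split => [z Iz|z [n _]]; last by rewrite /E; case: ifP => // _ [].
  have [[q qI zq]|zmax] := itv_le_ratr_or_max _ Iz.
    by exists (pickle q).+1 => //; rewrite /E /t pickleK qI.
  have [topI top_max] : maxI top by apply: (@xgetPex _ 0 maxI); exists z.1.
  by exists 0%N => //; rewrite /E /= topI; split => //; exact: top_max.
have mE n : measurable (E n).
  by rewrite /E; case: ifP => _; [exact: measurable_slab_upto | exact: measurable0].
apply/(measurable_fun_bigcup _ mE) => n; rewrite /E; case: ifP => [/mg //|_].
exact: measurable_fun_set0.
Qed.

End slabs.

Section Linf_norm.
Context {R : realType} {d : nat}.

Lemma le_fine_ereal_sup (E : set (\bar R)) x : E x -> (0 <= x)%E ->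
  (ereal_sup E < +oo)%E -> (x <= (fine (ereal_sup E))%:E)%E.
Proof.
move=> Ex x0 Eoo; have xE := ereal_sup_ubound Ex.
by rewrite fineK // ge0_fin_numE // (le_trans x0).
Qed.

Lemma normLinf_lt_pinfty (J : set (ptsp R d)) g : Linf J g -> (normLinf J g < +oo)%E.
Proof.
move=> [_ [M gM]]; apply: (le_lt_trans _ (ltry M)).
by apply: ge_ereal_sup => _ [z Jz <-]; rewrite lee_fin gM.
Qed.

Lemma Linf_le_normLinf {J : set (ptsp R d)} {g : ptsp R d -> R} {z} : Linf J g -> J z ->
  `|g z| <= fine (normLinf J g).
Proof.
move=> gJ Jz; rewrite -lee_fin le_fine_ereal_sup ?lee_fin //.
  by exists z.
exact: normLinf_lt_pinfty.
Qed.

End Linf_norm.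

Section causal_gronwall.
Variables (R : realType) (d : nat) (I : interval R)
  (lam : {measure set (ptsp R d) -> \bar R}) (p : R)
  (G : nat -> ptsp R d -> ptsp R d -> R) (f v : ptsp R d -> R) (gamma : R).
Hypotheses (p_ge1 : 1 <= p) (gamma01 : 0 < gamma < 1)
  (G_meas : forall l, measurable_fun [set: ptsp R d * ptsp R d]
                        (fun zw => G l zw.1 zw.2))
  (G_ge0 : forall l z w, 0 <= G l z w)
  (G_causal : forall l z w, w.1 > z.1 -> G l z w = 0)
  (f_Linf : Linf (slab d I) f)
  (v_ge0 : forall z, slab d I z -> 0 <= v z)
  (v_Linf_upto : forall T, T \in I -> Linf (slab_upto d I T) v).

Local Notation S := (slab d I).

Let Phi z := (\sum_(1 <= l <oo)
  (\int[lam]_(w in S) (G l z w)%:E) `^ p^-1)%E.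
Let theta := fine (ereal_sup [set Phi z | z in S]).
Let F := fine (normLinf S f).

Hypothesis theta_fin : (ereal_sup [set Phi z | z in S] < +oo)%E.
Hypothesis v_ineq : forall z, S z ->
  ((v z)%:E <= (f z)%:E + (\sum_(1 <= l <oo)
     \int[lam]_(w in S) (G l z w * v w `^ (p * gamma))%:E) `^ p^-1)%E.

Let p_gt0 : 0 < p. Proof. exact: lt_le_trans ltr01 p_ge1. Qed.

Section bound_upto.
Variables (T M : R).
Hypothesis v_le_M : forall w, slab_upto d I T w -> v w <= M.

Lemma integral_Gv_le l z : slab_upto d I T z ->
  (\int[lam]_(w in S) (G l z w * v w `^ (p * gamma))%:E <=
   (M `^ (p * gamma))%:E * \int[lam]_(w in S) (G l z w)%:E)%E.
Proof.
move=> zT; have M0 : 0 <= M := le_trans (v_ge0 _ zT.1) (v_le_M _ zT).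
have /andP[g0 _] := gamma01.
have mG : measurable_fun S (fun w => (G l z w)%:E).
  apply: measurableT_comp => //; apply: (measurable_funS measurableT) => //.
  exact: measurableT_comp (G_meas l) (pair1_measurable z).
rewrite muleC -(ge0_integralZr _ (measurable_slab R d I) mG); last 2 first.
- by move=> w _; rewrite lee_fin.
- by rewrite lee_fin powR_ge0.
apply: ge0_le_integral_any => [w _|w Iw]; first by rewrite lee_fin mulr_ge0 ?powR_ge0.
rewrite -EFinM lee_fin; have [zw|wz] := ltP z.1 w.1; first by rewrite G_causal ?mul0r.
rewrite ler_wpM2l //; apply: ge0_ler_powR; rewrite ?nnegrE ?v_ge0 //.
- by rewrite mulr_ge0 // ltW.
- by apply: v_le_M; split => //; exact: le_trans zT.2.
Qed.

Lemma series_Gv_le z : slab_upto d I T z ->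
  ((\sum_(1 <= l <oo) \int[lam]_(w in S) (G l z w * v w `^ (p * gamma))%:E)
     `^ p^-1 <= (M `^ gamma)%:E * Phi z)%E.
Proof.
move=> zT; have M0 : 0 <= M := le_trans (v_ge0 _ zT.1) (v_le_M _ zT).
have ge0_itv (x : \bar R) : (0 <= x)%E -> x \in `[0%E, +oo%E].
  by move=> x0; rewrite in_itv /= x0 leey.
pose A l := (\int[lam]_(w in S) (G l z w)%:E)%E.
have A0 l : (0 <= A l)%E by apply: integral_ge0 => w _; rewrite lee_fin.
have Gv0 l : (0 <= \int[lam]_(w in S) (G l z w * v w `^ (p * gamma))%:E)%E.
  by apply: integral_ge0 => w _; rewrite lee_fin mulr_ge0 ?powR_ge0.
have sum_le : (\sum_(1 <= l <oo) \int[lam]_(w in S) (G l z w * v w `^ (p * gamma))%:E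
    <= (M `^ (p * gamma))%:E * \sum_(1 <= l <oo) A l)%E.
  rewrite -nneseriesZl ?lee_fin ?powR_ge0 //.
  by apply: lee_nneseries => [l _ _|l _]; [exact: Gv0 | exact: integral_Gv_le _ zT].
apply: (le_trans (gt0_ler_poweR _ _ _ sum_le)); rewrite ?ge0_itv //.
- by rewrite invr_ge0 ltW.
- exact: nneseries_ge0.
- by rewrite mule_ge0 ?lee_fin ?powR_ge0 //; exact: nneseries_ge0.
rewrite poweRM ?lee_fin ?powR_ge0 //; last by apply: nneseries_ge0 => l _ _.
rewrite poweR_EFin -powRrM mulrAC divff ?gt_eqF // mul1r.
apply: lee_wpmul2l; first by rewrite lee_fin powR_ge0.
exact: poweRV_nneseries_le.
Qed.

End bound_upto.

Lemma Phi_le_theta z : S z -> (Phi z <= theta%:E)%E.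
Proof.
move=> Sz; apply: le_fine_ereal_sup theta_fin; first by exists z.
by apply: nneseries_ge0 => l _ _; exact: poweR_ge0.
Qed.

Lemma normLinf_f_ge0 z : S z -> 0 <= F.
Proof. by move=> Sz; exact: le_trans (normr_ge0 _) (Linf_le_normLinf f_Linf Sz). Qed.

Lemma v_le_upto_bound T M : (forall w, slab_upto d I T w -> v w <= M) ->
  forall z, slab_upto d I T z -> v z <= F + theta * M `^ gamma.
Proof.
move=> v_le_M z zT; have Sz : S z := zT.1.
rewrite -lee_fin; apply: (le_trans (v_ineq _ Sz)); rewrite EFinD EFinM.
apply: leeD; first by rewrite lee_fin (le_trans (ler_norm _)) ?Linf_le_normLinf.
rewrite muleC; apply: (le_trans (series_Gv_le _ _ v_le_M _ zT)).
by apply: lee_wpmul2l; rewrite ?lee_fin ?powR_ge0 ?Phi_le_theta.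
Qed.

Lemma v_sublinear_bound z : S z ->
  exists2 M, M <= F + theta * M `^ gamma & v z <= M.
Proof.
move=> Sz; have [_ [Mb vMb]] := v_Linf_upto _ Sz.
pose E := [set v w | w in slab_upto d I z.1].
have zT : slab_upto d I z.1 z by [].
have Eub : has_ubound E.
  by exists Mb => _ [w wT <-]; exact: le_trans (ler_norm _) (vMb w wT).
have v_le_sup w : slab_upto d I z.1 w -> v w <= sup E.
  by move=> wT; apply: ub_le_sup => //; exists w.
exists (sup E); last exact: v_le_sup.
apply: ge_sup; first by exists (v z), z.
by move=> _ [w wT <-]; exact: v_le_upto_bound v_le_sup _ wT.
Qed.

Lemma v_Linf : Linf S v.
Proof.
split; first by apply: measurable_fun_slab => T TI; case: (v_Linf_upto _ TI).
exists (1 + (F + theta) `^ (1 - gamma)^-1) => z Sz.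
have [M M_sub vM] := v_sublinear_bound z Sz.
rewrite ger0_norm ?v_ge0 // (le_trans vM) //.
exact: sublinear_le (normLinf_f_ge0 z Sz) gamma01 _ M_sub.
Qed.

Lemma normLinf_v_le a : 0 < a -> a - F - theta * a `^ gamma = 0 ->
  (normLinf S v <= a%:E)%E.
Proof.
move=> a0 ha; apply: ge_ereal_sup => _ [z Sz <-].
have [M M_sub vM] := v_sublinear_bound z Sz.
rewrite lee_fin ger0_norm ?v_ge0 // (le_trans vM) //.
exact: sublinear_le_root (normLinf_f_ge0 z Sz) gamma01 _ _ a0 ha M_sub.
Qed.

End causal_gronwall.

Theorem mainTheorem13 (R : realType) (d : nat) (I : interval R)
  (lam : {measure set (ptsp R d) -> \bar R}) (p : R)
  (G : nat -> ptsp R d -> ptsp R d -> R) (f v : ptsp R d -> R) (gamma : R) :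
  1 <= p ->
  (forall l, measurable_fun [set: ptsp R d * ptsp R d]
               (fun zw => G l zw.1 zw.2)) ->
  (forall l z w, 0 <= G l z w) ->
  (forall l z w, w.1 > z.1 -> G l z w = 0) ->
  Linf (slab d I) f ->
  (forall z, slab d I z -> 0 <= f z) ->
  (ereal_sup [set (\sum_(1 <= l <oo)
        (\int[lam]_(w in slab d I) (G l z w)%:E) `^ p^-1)%E
      | z in slab d I] < +oo)%E ->
  0 < gamma < 1 ->
  (forall z, slab d I z -> 0 <= v z) ->
  (forall T, T \in I -> Linf (slab_upto d I T) v) ->
  (forall z, slab d I z ->
     ((v z)%:E <= (f z)%:E + (\sum_(1 <= l <oo)
        \int[lam]_(w in slab d I) (G l z w * v w `^ (p * gamma))%:E)
        `^ p^-1)%E) ->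
  let theta := fine (ereal_sup [set (\sum_(1 <= l <oo)
        (\int[lam]_(w in slab d I) (G l z w)%:E) `^ p^-1)%E
      | z in slab d I]) in
  Linf (slab d I) v /\
  (forall a : R, 0 < a ->
     a - fine (normLinf (slab d I) f) - theta * a `^ gamma = 0 ->
     (normLinf (slab d I) v <= a%:E)%E).
Proof.
move=> p_ge1 G_meas G_ge0 G_causal f_Linf _ theta_fin gamma01 v_ge0 v_Linf_upto
  v_ineq theta.
by split; [apply: (v_Linf _ _ _ lam p G f v gamma) |
           apply: (normLinf_v_le _ _ _ lam p G f v gamma)].
Qed.
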